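(* Let $R$ be a $\mathbb{C}$-algebra which is a noetherian UFD, let $r,s\in R$ be elements such that the ideal $(r,s)$ has height $2$ and $r,s$ share no common non-unit factor, and let $A_{r,s}:=R[U,V]/(rU-sV-1)$ with $u,v$ the residue classes of $U,V$. Assume: $A_{r,s}$ is a UFD; $A_{r,s}^*=R^*$; $R$ is rigid and $ML(A_{r,s})=R$. Let $E$ be the $R$-derivation of $A_{r,s}$ with $E(u)=s$, $E(v)=r$. Then for every $\mathbb{C}$-algebra automorphism $\varphi$ of $A_{r,s}$ one has $\varphi^{-1}E\varphi=\lambda E$ for some $\lambda\in R^*$.
   Context: A derivation $D$ of a ring $B$ is locally nilpotent if for every $b\in B$ there is $n$ with $D^n(b)=0$; $\operatorname{LND}(B)$ denotes the set of locally nilpotent $\mathbb{C}$-derivations of the $\mathbb{C}$-algebra $B$. The Makar-Limanov invariant $ML(B)$ is the intersection of the kernels of all $D\in\operatorname{LND}(B)$. $B$ is rigid if $\operatorname{LND}(B)=\{0\}$. $B^*$ denotes the unit group. *)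

From mathcomp Require Import all_boot all_order all_algebra all_fingroup.
From mathcomp Require Import reals complex.
Set Implicit Arguments. Unset Strict Implicit. Unset Printing Implicit Defensive.
Import GRing.Theory.
Local Open Scope ring_scope.

Notation cplx Rr := (Rr[i])%type (only parsing).

Section CommAlg.
Variable R : idomainType.

Definition dvdr (a b : R) : Prop := exists c, b = c * a.
Definition assoc (a b : R) : Prop := exists2 u, u \is a GRing.unit & a = u * b.
Definition irreducibleR (a : R) : Prop :=
  [/\ a != 0, a \isn't a GRing.unit &
      forall b c, a = b * c -> b \is a GRing.unit \/ c \is a GRing.unit].

Definition UFD : Prop :=
  (forall a : R, a != 0 -> a \isn't a GRing.unit ->
     exists s : seq R, (forall x, x \in s -> irreducibleR x) /\
                       a = \prod_(x <- s) x) /\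
  (forall s t : seq R,
     (forall x, x \in s -> irreducibleR x) ->
     (forall x, x \in t -> irreducibleR x) ->
     \prod_(x <- s) x = \prod_(x <- t) x ->
     size s = size t /\
     exists sigma : 'S_(size s),
       forall i : 'I_(size s), assoc (nth 0 s i) (nth 0 t (sigma i))).

Definition ideal (I : R -> Prop) : Prop :=
  [/\ I 0, (forall x y, I x -> I y -> I (x + y)) &
      (forall a x, I x -> I (a * x))].
Definition subI (I J : R -> Prop) : Prop := forall x, I x -> J x.
Definition ssubI (I J : R -> Prop) : Prop := subI I J /\ exists x, J x /\ ~ I x.
Definition eqI (I J : R -> Prop) : Prop := forall x, I x <-> J x.
Definition prime_ideal (P : R -> Prop) : Prop :=
  [/\ ideal P, ~ P 1 & forall a b, P (a * b) -> P a \/ P b].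

Definition noetherian : Prop :=
  forall I : nat -> R -> Prop,
    (forall n, ideal (I n)) -> (forall n, subI (I n) (I n.+1)) ->
    exists n, forall m, (n <= m)%N -> eqI (I m) (I n).

Definition ideal2 (r s : R) : R -> Prop := fun x => exists a b, x = a * r + b * s.

Definition prime_chain_to (n : nat) (P : R -> Prop) : Prop :=
  exists f : nat -> R -> Prop,
    [/\ forall i, (i <= n)%N -> prime_ideal (f i),
        forall i, (i < n)%N -> ssubI (f i) (f i.+1) & eqI (f n) P].

Definition height_ge (I : R -> Prop) (n : nat) : Prop :=
  forall P, prime_ideal P -> subI I P -> prime_chain_to n P.
Definition height_eq (I : R -> Prop) (n : nat) : Prop :=
  height_ge I n /\ ~ height_ge I n.+1.
End CommAlg.

(* C-algebras: a commutative ring B together with a ring morphism C -> B. *)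
Section Derivations.
Variables (C : fieldType) (B : comNzRingType) (c : C -> B).

Definition derivation (D : B -> B) : Prop :=
  (forall x y, D (x + y) = D x + D y) /\
  (forall x y, D (x * y) = x * D y + D x * y).

Definition LND (D : B -> B) : Prop :=
  [/\ derivation D, (forall (k : C) x, D (c k * x) = c k * D x) &
      forall b, exists n, iter n D b = 0].

Definition rigid : Prop := forall D, LND D -> forall b, D b = 0.

Definition in_ML (b : B) : Prop := forall D, LND D -> D b = 0.
End Derivations.

(* Presentation of A as R[U,V]/(rU - sV - 1), with u, v the classes of U, V.
   R[U,V] is {poly {poly R}} (outer variable U, inner variable V). *)
Section Presentation.
Variables (R : idomainType) (A : comNzRingType) (iota : {rmorphism R -> A}).

Definition evUV (u v : A) (p : {poly {poly R}}) : A :=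
  (map_poly (fun q : {poly R} => (map_poly iota q).[v]) p).[u].

Definition relUV (r s : R) : {poly {poly R}} :=
  (r%:P)%:P * 'X - (s%:P * 'X)%:P - 1.

Definition is_presentation (r s : R) (u v : A) : Prop :=
  (forall a : A, exists p, evUV u v p = a) /\
  (forall p, evUV u v p = 0 <-> exists q, p = q * relUV r s).
End Presentation.

(** The conjugate [D := phi^-1 E phi] is again a locally nilpotent derivation
    of [A], so it vanishes on [ML(A) = R] and is an [R]-derivation.  An
    [R]-derivation is determined by [D u] and [D v], and applying [D] to the
    relation [r u - s v = 1] gives [r D u = s D v]; hence
    [(D u, D v) = f (s, r) = f (E u, E v)] with [f = u D v - v D u], i.e.
    [D = f E].  Likewise [phi E phi^-1 = g E], and composing
    the two conjugations yields [phi(f) g E = E], whence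
    [phi(f) g = phi(f) g (u E v - v E u) = u E v - v E u = 1].  So [f] is a
    unit of [A], and units of [A] come from [R]. *)
From mathcomp Require Import all_boot all_order all_algebra all_fingroup.
From mathcomp Require Import reals complex.
From mathcomp Require Import ring.
Set Implicit Arguments. Unset Strict Implicit.
Import GRing.Theory.
Local Open Scope ring_scope.

Section Presentation.
Variables (R : idomainType) (A : comNzRingType) (iota : {rmorphism R -> A}).
Variables (r s : R) (u v : A).

Lemma evUV_relUV : evUV iota u v (relUV r s) = iota r * u - iota s * v - 1.
Proof.
pose F : {rmorphism {poly R} -> A} := (horner_eval v \o map_poly iota)%FUN.
rewrite /evUV /relUV -[map_poly _]/(map_poly F).
rewrite !rmorphB !rmorphM /= !map_polyC map_polyX !hornerE /comp /=.
rewrite !horner_evalE !map_polyC map_polyX !hornerE.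
by congr (_ - _ - _); exact: rmorph1.
Qed.

Lemma presentation_rel : is_presentation iota r s u v ->
  iota r * u - iota s * v = 1.
Proof.
move=> [_ kerUV]; apply/eqP; rewrite -subr_eq0 -evUV_relUV; apply/eqP.
by apply/kerUV; exists 1; rewrite mul1r.
Qed.

Lemma presentation_ind (P : A -> Prop) : is_presentation iota r s u v ->
  (forall x y, P x -> P y -> P (x + y)) -> (forall x y, P x -> P y -> P (x * y)) ->
  (forall x, P (iota x)) -> P u -> P v -> forall a, P a.
Proof.
move=> [surjUV _] PD PM PR Pu Pv a.
have P0 : P 0 by rewrite -(rmorph0 iota).
have P1 : P 1 by rewrite -(rmorph1 iota).
have PX x i : P x -> P (x ^+ i).
  by move=> Px; elim: i => [|i IH]; rewrite ?expr0 // exprS; apply: (PM).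
have [p <-] := surjUV a.
rewrite /evUV horner_coef; apply: big_ind => // i _; apply: (PM); last exact: (PX).
rewrite coef_map_id0; last by rewrite map_poly0 horner0.
rewrite horner_coef; apply: big_ind => // j _.
by apply: (PM); [rewrite coef_map; apply: (PR) | exact: (PX)].
Qed.

End Presentation.

Section Derivation.
Variables (A : comNzRingType) (D : A -> A).
Hypothesis dD : derivation D.

Lemma derivation0 : D 0 = 0.
Proof. by apply: (@addrI _ (D 0)); rewrite -dD.1 !addr0. Qed.

Lemma derivation1 : D 1 = 0.
Proof.
have := dD.2 1 1; rewrite !mulr1 mul1r => D1.
by apply: (@addrI _ (D 1)); rewrite -D1 addr0.
Qed.

Lemma derivationN x : D (- x) = - D x.
Proof. by apply: (@addrI _ (D x)); rewrite -dD.1 !subrr derivation0. Qed.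

Lemma derivationB x y : D (x - y) = D x - D y.
Proof. by rewrite dD.1 derivationN. Qed.

Lemma iter_derivation0 n : iter n D 0 = 0.
Proof. by elim: n => //= n ->; rewrite derivation0. Qed.

Lemma iter_derivationD n x y : iter n D (x + y) = iter n D x + iter n D y.
Proof. by elim: n x y => //= n IH x y; rewrite IH dD.1. Qed.

Lemma iter_derivationM_eq0 m n a b :
  iter m D a = 0 -> iter n D b = 0 -> iter (m + n) D (a * b) = 0.
Proof.
elim: m a b n => [|m IHm] a b n ha hb; first by rewrite [a]ha mul0r iter_derivation0.
elim: n b hb => [|n IHn] b hb; first by rewrite addn0 [b]hb mulr0 iter_derivation0.
rewrite addnS iterSr dD.2 iter_derivationD IHn -?iterSr // add0r.
by rewrite addSnnS IHm -?iterSr.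
Qed.

Definition locnil (a : A) : Prop := exists n, iter n D a = 0.

Lemma locnilD x y : locnil x -> locnil y -> locnil (x + y).
Proof.
move=> [m hm] [n hn]; exists (m + n)%N.
by rewrite iter_derivationD {1}addnC !iterD hm hn !iter_derivation0 addr0.
Qed.

Lemma locnilM x y : locnil x -> locnil y -> locnil (x * y).
Proof. by move=> [m hm] [n hn]; exists (m + n)%N; apply: iter_derivationM_eq0. Qed.

End Derivation.

Section Conjugation.
Variables (C : fieldType) (A : comNzRingType) (c : C -> A) (psi chi : A -> A).
Hypotheses (psiK : cancel psi chi) (chiK : cancel chi psi).
Hypotheses (psiD : {morph psi : x y / x + y}) (psiM : {morph psi : x y / x * y}).
Hypothesis psiC : forall k, psi (c k) = c k.

Lemma inv_morphD : {morph chi : x y / x + y}.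
Proof. by move=> x y; apply: (can_inj psiK); rewrite psiD !chiK. Qed.

Lemma inv_morphM : {morph chi : x y / x * y}.
Proof. by move=> x y; apply: (can_inj psiK); rewrite psiM !chiK. Qed.

Lemma inv_morph0 : chi 0 = 0.
Proof.
apply: (can_inj psiK); rewrite chiK.
by apply: (@addrI _ (psi 0)); rewrite -psiD !addr0.
Qed.

Variable D : A -> A.
Hypothesis lndD : LND c D.

Let Dc := (chi \o D \o psi)%FUN.

Lemma conj_derivation : derivation Dc.
Proof.
have [[DD DM] _ _] := lndD.
by split=> x y; rewrite /Dc /= (psiD, psiM) (DD, DM) inv_morphD ?inv_morphM ?psiK.
Qed.

Lemma iter_conj n a : iter n Dc a = chi (iter n D (psi a)).
Proof. by elim: n a => [|n IH] a /=; rewrite ?psiK // IH /Dc /= chiK. Qed.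

Lemma conj_LND : LND c Dc.
Proof.
have [dD DC DN] := lndD.
split; first exact: conj_derivation.
  by move=> k x; rewrite /Dc /= psiM psiC DC inv_morphM -{1}(psiC k) psiK.
by move=> b; have [n hn] := DN (psi b); exists n; rewrite iter_conj hn inv_morph0.
Qed.

End Conjugation.

Section DerivationE.
Variables (Rr : realType) (R : idomainType) (cR : {rmorphism Rr[i] -> R}).
Variables (r s : R) (A : comNzRingType) (iota : {rmorphism R -> A}) (u v : A).
Hypothesis A_pres : is_presentation iota r s u v.
Hypothesis ML_A : forall a : A,
  in_ML (fun k => iota (cR k)) a <-> exists x : R, a = iota x.
Variable E : A -> A.
Hypotheses (E_der : derivation E) (E_R : forall x : R, E (iota x) = 0).
Hypotheses (E_u : E u = iota s) (E_v : E v = iota r).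

Let c k := iota (cR k).

Lemma LND_E : LND c E.
Proof.
split=> // [k x|a]; first by rewrite E_der.2 E_R mul0r addr0.
move: a; apply: (presentation_ind A_pres) => [||x||].
- exact: locnilD.
- exact: locnilM.
- by exists 1%N; rewrite /= E_R.
- by exists 2%N; rewrite /= E_u E_R.
- by exists 2%N; rewrite /= E_v E_R.
Qed.

Lemma Rderivation_eq_mulE D : derivation D -> (forall x, D (iota x) = 0) ->
  forall a, D a = (u * D v - v * D u) * E a.
Proof.
move=> dD DR; set f := u * D v - v * D u.
have rel := presentation_rel A_pres.
have DrDs : iota r * D u = iota s * D v.
  apply/eqP; rewrite -subr_eq0; apply/eqP.
  have := f_equal D rel; rewrite (derivationB dD) !dD.2 !DR (derivation1 dD).
  by rewrite !mul0r !addr0.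
have Du : D u = f * iota s.
  rewrite -[D u]mulr1 -rel.
  rewrite (_ : D u * _ = u * (iota r * D u) - iota s * v * D u); last by ring.
  by rewrite DrDs /f; ring.
have Dv : D v = f * iota r.
  rewrite -[D v]mulr1 -rel.
  rewrite (_ : D v * _ = iota r * u * D v - v * (iota s * D v)); last by ring.
  by rewrite -DrDs /f; ring.
apply: (presentation_ind A_pres (P := fun a => D a = f * E a)).
- by move=> x y hx hy; rewrite dD.1 E_der.1 hx hy mulrDr.
- by move=> x y hx hy; rewrite dD.2 E_der.2 hx hy; ring.
- by move=> x; rewrite DR E_R mulr0.
- by rewrite Du E_u.
- by rewrite Dv E_v.
Qed.

Lemma conj_E_eq_mulE (psi chi : A -> A) :
  cancel psi chi -> cancel chi psi ->
  {morph psi : x y / x + y} -> {morph psi : x y / x * y} ->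
  (forall k, psi (c k) = c k) ->
  exists f, forall a, chi (E (psi a)) = f * E a.
Proof.
move=> psiK chiK psiD psiM psiC.
have lndD := conj_LND psiK chiK psiD psiM psiC LND_E.
exists (u * chi (E (psi v)) - v * chi (E (psi u))).
apply: Rderivation_eq_mulE => [|x]; first by case: lndD.
exact: (ML_A (iota x)).2 (ex_intro _ x erefl) _ lndD.
Qed.

Lemma mulE_eqE_eq1 f : (forall a, f * E a = E a) -> f = 1.
Proof.
move=> fE; rewrite -[f]mulr1 -(presentation_rel A_pres) mulrBr !mulrA.
by rewrite -E_u -E_v !fE.
Qed.

End DerivationE.

Theorem mainTheorem5
  (Rr : realType) (R : idomainType) (cR : {rmorphism Rr[i] -> R})
  (r s : R)
  (R_UFD : UFD R) (R_noeth : noetherian R)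
  (ht_rs : height_eq (ideal2 r s) 2)
  (rs_coprime : forall d : R, dvdr d r -> dvdr d s -> d \is a GRing.unit)
  (A : idomainType) (iota : {rmorphism R -> A}) (u v : A)
  (A_pres : is_presentation iota r s u v)
  (A_UFD : UFD A)
  (A_units : forall a : A,
     a \is a GRing.unit <-> exists2 x : R, x \is a GRing.unit & a = iota x)
  (R_rigid : rigid cR)
  (ML_A : forall a : A, in_ML (fun k => iota (cR k)) a <-> exists x : R, a = iota x)
  (E : A -> A) (E_der : derivation E)
  (E_R : forall x : R, E (iota x) = 0)
  (E_u : E u = iota s) (E_v : E v = iota r)
  (phi : {rmorphism A -> A}) (phi_inv : A -> A)
  (phiK : cancel phi phi_inv) (phi_invK : cancel phi_inv phi)
  (phi_C : forall k : Rr[i], phi (iota (cR k)) = iota (cR k)) :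
  exists2 lam : R, lam \is a GRing.unit &
    forall a : A, phi_inv (E (phi a)) = iota lam * E a.
Proof.
have conjE := conj_E_eq_mulE A_pres ML_A E_der E_R E_u E_v.
have [f hf] := conjE _ _ phiK phi_invK (rmorphD phi) (rmorphM phi) phi_C.
have inv_C k : phi_inv (iota (cR k)) = iota (cR k) by rewrite -{1}phi_C phiK.
have [g hg] := conjE _ _ phi_invK phiK (inv_morphD phiK phi_invK (rmorphD phi))
  (inv_morphM phiK phi_invK (rmorphM phi)) inv_C.
have fg1 : phi f * g = 1.
  apply: (mulE_eqE_eq1 A_pres E_u E_v) => a.
  by rewrite -mulrA -hg -rmorphM -hf phi_invK phi_invK.
have fU : f \is a GRing.unit.
  apply/unitrPr; exists (phi_inv g).
  by apply: (can_inj phiK); rewrite rmorph1 rmorphM phi_invK.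
have [lam lamU f_lam] := (A_units f).1 fU.
by exists lam => // a; rewrite hf f_lam.
Qed.
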